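(* Let $V=(x_1,\dots,x_n)$ be a list of $n$ real numbers in $[L,U]$, listed in non-decreasing order, and let $k$ be an integer with $k<n$. Then a $k$-maximal variance subset of $V$ can be obtained by removing $n-k$ consecutive elements of $V$, i.e. there exists a $k$-maximal variance subset of the form $\{x_1,\dots,x_i\}\cup\{x_{i+n-k+1},\dots,x_n\}$ for some $0\le i\le k$.
   Context: For a finite (multi)set $Q$ of reals with $|Q|=k$, $\mathrm{Var}[Q]=\frac{1}{k}\sum_{q\in Q}(q-\mu_Q)^2$ with $\mu_Q=\frac1k\sum_{q\in Q}q$. A subset $Q\subset V$ (a choice of $k$ of the $n$ entries) is a $k$-maximal variance subset of $V$ if $|Q|=k$ and $\mathrm{Var}[Q']\le\mathrm{Var}[Q]$ for every $Q'\subset V$ with $|Q'|=k$. *)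

From HB Require Import structures.
From mathcomp Require Import all_boot all_order all_algebra.
Set Implicit Arguments. Unset Strict Implicit. Unset Printing Implicit Defensive.
Import Order.TTheory GRing.Theory Num.Theory.
Local Open Scope ring_scope.

(* A list V = (x_1,...,x_n) is a function x : 'I_n -> R (index i <-> x_{i+1}).
   A sub(multi)set Q of V is a set of indices Q : {set 'I_n}. *)

Definition mean (R : realFieldType) (n : nat) (x : 'I_n -> R) (Q : {set 'I_n}) : R :=
  (\sum_(i in Q) x i) / #|Q|%:R.

Definition var (R : realFieldType) (n : nat) (x : 'I_n -> R) (Q : {set 'I_n}) : R :=
  (\sum_(i in Q) (x i - mean x Q) ^+ 2) / #|Q|%:R.

Definition kmaxvar (R : realFieldType) (n : nat) (x : 'I_n -> R) (k : nat)
  (Q : {set 'I_n}) : Prop :=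
  #|Q| = k /\ forall Q' : {set 'I_n}, #|Q'| = k -> var x Q' <= var x Q.

From HB Require Import structures.
From mathcomp Require Import all_boot all_order all_algebra.
From mathcomp Require Import zify ring lra.
Set Implicit Arguments.
Unset Strict Implicit.
Unset Printing Implicit Defensive.

Import Order.TTheory GRing.Theory Num.Theory.
Local Open Scope ring_scope.

(* Let Q be a k-subset whose complement is not a run of consecutive indices,
   and let a < b be the extreme indices missing from Q; some p in Q lies
   between them.  With S := Q minus p fixed, var (y |: S) is a convex quadratic
   function of x_y, so since x_a <= x_p <= x_b, exchanging p for a or for b
   does not decrease the variance.  Either exchange strictly shrinks the span
   of the complement, so iterating ends at a set obtained by omitting a run,
   with variance at least var Q; the best of these k + 1 sets is therefore
   k-maximal. *)

Definition run n i m : {set 'I_n} := [set t : 'I_n | (i <= t < i + m)%N].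

Definition omit_run n i m : {set 'I_n} := [set t : 'I_n | (t < i)%N || (i + m <= t)%N].

Lemma setC_omit_run n i m : ~: omit_run n i m = run n i m.
Proof. by apply/setP => t; rewrite !inE negb_or -leqNgt -ltnNge. Qed.

Lemma card_run n i m : (i + m <= n)%N -> #|run n i m| = m.
Proof.
elim: m => [|m IHm] hm.
  by apply/eqP; rewrite cards_eq0; apply/eqP/setP => t; rewrite !inE addn0 ltnNge andbN.
have him : (i + m < n)%N by rewrite addnS in hm.
have -> : run n i m.+1 = Ordinal him |: run n i m.
  by apply/setP => t; rewrite !inE -val_eqE /=; clear IHm; lia.
by rewrite cardsU1 (IHm (ltnW him)) !inE /= ltnn andbF.
Qed.

Lemma card_omit_run n i m : (i + m <= n)%N -> #|omit_run n i m| = (n - m)%N.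
Proof.
by move=> hm; rewrite cardsCs setC_omit_run card_run // card_ord.
Qed.

Lemma run_or_gap n (Q : {set 'I_n}) : ~: Q != set0 ->
  (exists2 i, (i + #|~: Q| <= n)%N & Q = omit_run n i #|~: Q|) \/
  exists a p b : 'I_n, [/\ a \notin Q, p \in Q, b \notin Q, (a < p < b)%N &
                         forall c : 'I_n, c \notin Q -> (a <= c <= b)%N].
Proof.
case/set0Pn => c0; rewrite inE => c0Q.
have [a aQ a_min] := @arg_minnP _ c0 [pred t | t \notin Q] val c0Q.
have [b bQ b_max] := @arg_maxnP _ c0 [pred t | t \notin Q] val c0Q.
have within c : c \notin Q -> (a <= c <= b)%N.
  by move=> cQ; rewrite a_min //=; apply: b_max.
have [full|] := boolP [forall t : 'I_n, (a <= t <= b)%N ==> (t \notin Q)].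
  left; have ab : (a <= b)%N by have /andP[] := within b bQ.
  have ab1 : (a + (b.+1 - a) = b.+1)%N := subnKC (leqW ab).
  have QC : ~: Q = run n a (b.+1 - a).
    apply/setP => t; rewrite !inE ab1 ltnS.
    by apply/idP/idP => [/within | /(implyP (forallP full t))].
  have b1n : (a + (b.+1 - a) <= n)%N by rewrite ab1.
  exists a; rewrite QC card_run //.
  by apply: setC_inj; rewrite QC setC_omit_run.
rewrite negb_forall => /existsP[p]; rewrite negb_imply negbK => /andP[/andP[ap pb] pQ].
right; exists a, p, b; split => //.
have neq t : t \notin Q -> (t : nat) != p by apply: contraNneq => /val_inj ->.
by rewrite !ltn_neqAle ap pb neq // eq_sym neq.
Qed.

Lemma exchange_spread n (Q : {set 'I_n}) (a p b e : 'I_n) :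
  (forall c : 'I_n, c \notin Q -> (a <= c <= b)%N) -> (a < p < b)%N -> (e == a) || (e == b) ->
  forall c c' : 'I_n, c \notin e |: Q :\ p -> c' \notin e |: Q :\ p -> (c' - c < b - a)%N.
Proof.
move=> within /andP[ap pb] e_end.
have range t : t \notin e |: Q :\ p -> [&& a <= t, t <= b & (t : nat) != e]%N.
  rewrite !inE negb_or negb_and negbK => /andP[te tQ]; rewrite val_eqE te andbT.
  by case/orP: tQ => [/eqP -> | /within //]; rewrite (ltnW ap) (ltnW pb).
move=> c c' /range/and3P[ac cb ce] /range/and3P[ac' c'b c'e].
by case/orP: e_end => /eqP e_end; rewrite e_end in ce c'e; lia.
Qed.

Lemma convex_quadratic_le_endpoint (R : realDomainType) (c d e y1 y y2 : R) :
  0 <= c -> y1 <= y -> y <= y2 ->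
  let q v := c * v ^+ 2 + d * v + e in q y <= q y1 \/ q y <= q y2.
Proof.
move=> c_ge0 le1 le2 q.
have chord : (y2 - y) * (q y1 - q y) + (y - y1) * (q y2 - q y)
             = c * ((y2 - y) * (y - y1) * (y2 - y1)) by rewrite /q; ring.
have chord_ge0 : 0 <= c * ((y2 - y) * (y - y1) * (y2 - y1)).
  by rewrite mulr_ge0 // !mulr_ge0 // subr_ge0 // (le_trans le1).
case: (lerP (q y) (q y1)) => [|lt1]; [by left | right].
have lt_y1y : 0 < y - y1.
  by rewrite subr_gt0 lt_neqAle le1 andbT; apply: contraTneq lt1 => ->; rewrite ltxx.
have tilt : (y2 - y) * (q y1 - q y) <= 0.
  by apply: mulr_ge0_le0; rewrite ?subr_ge0 ?subr_le0 ?(ltW lt1).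
rewrite -subr_ge0 -(pmulr_rge0 _ lt_y1y).
move: chord chord_ge0 tilt; set a := q y1; set b := q y2; set z := q y; nra.
Qed.

Section Variance.
Variables (R : realFieldType) (n : nat) (x : 'I_n -> R).

Lemma varE (Q : {set 'I_n}) : var x Q = (\sum_(i in Q) x i ^+ 2) / #|Q|%:R - mean x Q ^+ 2.
Proof.
rewrite /var; set m := mean x Q.
have -> : \sum_(i in Q) (x i - m) ^+ 2 =
    \sum_(i in Q) x i ^+ 2 - (m *+ 2) * \sum_(i in Q) x i + m ^+ 2 *+ #|Q|.
  rewrite mulr_sumr -sumrB -sumr_const -big_split /=.
  by apply: eq_bigr => i _; ring.
have [Q0|Q_gt0] := posnP #|Q|; first by rewrite /m /mean Q0 invr0 !mulr0 expr0n subr0.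
have sum_mean : \sum_(i in Q) x i = m * #|Q|%:R by rewrite /m /mean divfK ?pnatr_eq0 -?lt0n.
rewrite sum_mean -mulr_natr; field.
by rewrite pnatr_eq0 -lt0n.
Qed.

Lemma var_setU1_quadratic (S : {set 'I_n}) : exists c d e : R, 0 <= c /\
  forall y, y \notin S -> var x (y |: S) = c * x y ^+ 2 + d * x y + e.
Proof.
set t : R := (#|S|.+1)%:R^-1; set s1 := \sum_(i in S) x i; set s2 := \sum_(i in S) x i ^+ 2.
exists (t - t ^+ 2), (- (t ^+ 2 * s1) *+ 2), (t * s2 - (t * s1) ^+ 2); split.
  have t_ge0 : 0 <= t by rewrite invr_ge0 ler0n.
  have t_le1 : t <= 1 by rewrite invf_le1 ?ltr0Sn // ler1n.
  nra.
by move=> y yS; rewrite varE /mean cardsU1 yS !big_setU1 //= -/t -/s1 -/s2; ring.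
Qed.

Hypothesis x_sorted : {homo x : i j / (i <= j)%N >-> i <= j}.

Lemma var_le_exchange (Q : {set 'I_n}) (a p b : 'I_n) :
  a \notin Q -> p \in Q -> b \notin Q -> (a <= p)%N -> (p <= b)%N ->
  var x Q <= var x (a |: Q :\ p) \/ var x Q <= var x (b |: Q :\ p).
Proof.
move=> aQ pQ bQ ap pb.
have [c [d [e [c_ge0 var_quad]]]] := var_setU1_quadratic (Q :\ p).
have notin_D1 y : y \notin Q -> y \notin Q :\ p by rewrite inE negb_and => ->; rewrite orbT.
rewrite -[in var x Q](setD1K pQ) !var_quad ?setD11 ?notin_D1 //.
exact: convex_quadratic_le_endpoint c_ge0 (x_sorted ap) (x_sorted pb).
Qed.

Lemma var_le_omit_run_spread k d (Q : {set 'I_n}) : (k < n)%N -> #|Q| = k ->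
  (forall c c' : 'I_n, c \notin Q -> c' \notin Q -> (c' - c < d)%N) ->
  exists2 i, (i <= k)%N & var x Q <= var x (omit_run n i (n - k)).
Proof.
move=> kn; elim/ltn_ind: d Q => d IH Q Qk spread.
have QC : #|~: Q| = (n - k)%N by rewrite cardsCs setCK card_ord Qk.
have QC0 : ~: Q != set0 by rewrite -card_gt0 QC subn_gt0.
case: (run_or_gap QC0) => [[i run_i ->] | [a [p [b [aQ pQ bQ /andP[ap pb] within]]]]].
  by exists i; rewrite QC // in run_i *; clear -run_i kn; lia.
have exchange e : e \notin Q -> (e == a) || (e == b) -> var x Q <= var x (e |: Q :\ p) ->
    exists2 i, (i <= k)%N & var x Q <= var x (omit_run n i (n - k)).
  move=> eQ e_end le_var.
  have [||i ik le_i] := IH (b - a)%N (spread a b aQ bQ) (e |: Q :\ p).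
  - by rewrite -Qk (cardsD1 p Q) pQ cardsU1 !inE negb_and eQ orbT.
  - by apply: exchange_spread within _ e_end; rewrite ap pb.
  by exists i; last exact: le_trans le_var le_i.
have [le_a | le_b] := var_le_exchange aQ pQ bQ (ltnW ap) (ltnW pb).
  by apply: exchange le_a; rewrite ?eqxx.
by apply: exchange le_b; rewrite ?eqxx ?orbT.
Qed.

Lemma var_le_omit_run k (Q : {set 'I_n}) : (k < n)%N -> #|Q| = k ->
  exists2 i, (i <= k)%N & var x Q <= var x (omit_run n i (n - k)).
Proof.
move=> kn Qk; apply: (var_le_omit_run_spread (d := n)) => // c c' _ _.
exact: leq_ltn_trans (leq_subr c c') (ltn_ord c').
Qed.

End Variance.

Theorem mainTheorem3 (R : realFieldType) (n k : nat) (L U : R) (x : 'I_n -> R)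
  (hLU : forall j, L <= x j <= U)
  (hsort : forall i j : 'I_n, (i <= j)%N -> x i <= x j)
  (hk : (k < n)%N) :
  exists2 i : nat, (i <= k)%N &
    kmaxvar x k [set j : 'I_n | (j < i)%N || (i + (n - k) <= j)%N].
Proof.
pose F (i : 'I_k.+1) := var x (omit_run n i (n - k)).
have [i _ i_max] := @arg_maxP _ _ _ ord0 predT F isT.
have ik : (i <= k)%N by rewrite -ltnS.
have ikn : (i + (n - k) <= n)%N by clear -ik hk; lia.
exists i => //; split; first by rewrite card_omit_run // subKn // (ltnW hk).
move=> Q Qk; have [j jk le_j] := var_le_omit_run hsort hk Qk.
exact: le_trans le_j (i_max (Ordinal (jk : (j < k.+1)%N)) isT).
Qed.
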